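(* For every triple $XYZ\in\{I,S\}^3$, the set of contexts $\mathrm{ST}_{XYZ}$ of the uniform evaluator $XYZ$ is uniform, i.e. for all contexts $C_1,C_2$, $C_1(C_2)\in\mathrm{ST}_{XYZ}$ if and only if $C_1\in\mathrm{ST}_{XYZ}$ and $C_2\in\mathrm{ST}_{XYZ}$.
   Context: Terms: $\Lambda ::= x\mid\lambda x.\Lambda\mid\Lambda\Lambda$; $[N/x]B$ is capture-avoiding substitution; a redex is a term $(\lambda x.B)N$. An evaluator is a partial function $\Lambda\rightharpoonup\Lambda$ given by inference rules; it is undefined (diverges) on $M$ when there is no finite derivation; $\mathrm{id}$ is the identity evaluator. Eval-apply template: given evaluators $la,op_1,ar_1,op_2,ar_2$ (which may be the evaluator $ea$ being defined), $ea$ is defined by: (var) $ea(x)=x$; (abs) $ea(\lambda x.B)=\lambda x.B'$ if $la(B)=B'$; (con) $ea(MN)=B'$ if $op_1(M)=\lambda x.B$, $ar_1(N)=N'$ and $ea([N'/x]B)=B'$; (neu) $ea(MN)=M''N'$ if $op_1(M)=M'$, $M'$ is not an abstraction, $op_2(M')=M''$ and $ar_2(N)=N'$. Premises are evaluated left to right; each use of (con) contracts the redex $(\lambda x.B)N'$; reading these contractions in in-order traversal of the (possibly infinite) derivation, each located at its position in the whole current term, gives the evaluation sequence of $ea$ on the input. Uniform evaluator with code $XYZ\in\{I,S\}^3$: the instance of the template with $op_1=ea$, $op_2=\mathrm{id}$, and $la$ (resp. $ar_1$, $ar_2$) equal to $ea$ itself if $X$ (resp. $Y$, $Z$) is $S$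 and to $\mathrm{id}$ if it is $I$. A context is a term with one hole $\Box$; $C(R)$ replaces the hole by $R$, $C_1(C_2)$ replaces the hole of $C_1$ by context $C_2$. The set of contexts $\mathrm{ST}_e$ of an evaluator $e$ is the set of all contexts $C$ such that, for some input term, at some step of the evaluation sequence of $e$ the current term is $C(R)$ with $R$ the redex contracted at that step. *)

From Stdlib Require Import Arith.

Inductive term : Type :=
| Var : nat -> term
| Lam : term -> term
| App : term -> term -> term.

Fixpoint lift (k : nat) (t : term) : term :=
  match t with
  | Var n => if n <? k then Var n else Var (S n)
  | Lam b => Lam (lift (S k) b)
  | App a b => App (lift k a) (lift k b)
  end.

Fixpoint liftn (n : nat) (t : term) : term :=
  match n with
  | O => t
  | S m => lift 0 (liftn m t)
  end.

Fixpoint subst (k : nat) (u : term) (t : term) : term :=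
  match t with
  | Var n => if n <? k then Var n
             else if n =? k then liftn k u
             else Var (pred n)
  | Lam b => Lam (subst (S k) u b)
  | App a b => App (subst k u a) (subst k u b)
  end.

Definition beta_subst (B N : term) : term := subst 0 N B.

Definition is_abs (t : term) : Prop :=
  match t with Lam _ => True | _ => False end.

Inductive ctx : Type :=
| Hole : ctx
| CLam : ctx -> ctx
| CAppL : ctx -> term -> ctx
| CAppR : term -> ctx -> ctx.

(** C(R): hole replaced by R (capturing, as usual for contexts). *)
Fixpoint plug (C : ctx) (R : term) : term :=
  match C with
  | Hole => R
  | CLam C' => Lam (plug C' R)
  | CAppL C' N => App (plug C' R) N
  | CAppR M C' => App M (plug C' R)
  end.

Fixpoint ccomp (C1 C2 : ctx) : ctx :=
  match C1 with
  | Hole => C2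
  | CLam C' => CLam (ccomp C' C2)
  | CAppL C' N => CAppL (ccomp C' C2) N
  | CAppR M C' => CAppR M (ccomp C' C2)
  end.

(** A letter of the code XYZ : I means the identity evaluator, S means ea itself. *)
Inductive letter : Type := LI | LS.

(** Big-step (finite derivation) semantics of the uniform evaluator XYZ:
    instance of the eval-apply template with op1 = ea, op2 = id,
    la / ar1 / ar2 = ea or id according to X / Y / Z.
    A premise "e(P) = P'" with e selected by letter L is rendered as
    (L = LI /\ P' = P) \/ (L = LS /\ eval P P'). *)
Inductive eval (X Y Z : letter) : term -> term -> Prop :=
| ev_var : forall n, eval X Y Z (Var n) (Var n)
| ev_abs : forall B B',
    (X = LI /\ B' = B \/ X = LS /\ eval X Y Z B B') ->
    eval X Y Z (Lam B) (Lam B')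
| ev_con : forall M N B N' B',
    eval X Y Z M (Lam B) ->
    (Y = LI /\ N' = N \/ Y = LS /\ eval X Y Z N N') ->
    eval X Y Z (beta_subst B N') B' ->
    eval X Y Z (App M N) B'
| ev_neu : forall M N M' N',
    eval X Y Z M M' -> ~ is_abs M' ->
    (Z = LI /\ N' = N \/ Z = LS /\ eval X Y Z N N') ->
    eval X Y Z (App M N) (App M' N').

(** [step X Y Z M K R]: in the evaluation sequence of the uniform evaluator
    XYZ on input M (read off, in in-order traversal, from its possibly
    infinite derivation, premises evaluated left to right), there is a step
    at which the current term is plug K R and R is the contracted redex.
    The identity evaluator performs no steps. *)
Inductive step (X Y Z : letter) : term -> ctx -> term -> Prop :=
| st_abs : forall B K R,
    X = LS -> step X Y Z B K R ->
    step X Y Z (Lam B) (CLam K) R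
| st_op1 : forall M N K R,
    step X Y Z M K R ->
    step X Y Z (App M N) (CAppL K N) R
| st_ar1 : forall M N B K R,
    eval X Y Z M (Lam B) ->
    Y = LS -> step X Y Z N K R ->
    step X Y Z (App M N) (CAppR (Lam B) K) R
| st_con : forall M N B N',
    eval X Y Z M (Lam B) ->
    (Y = LI /\ N' = N \/ Y = LS /\ eval X Y Z N N') ->
    step X Y Z (App M N) Hole (App (Lam B) N')
| st_body : forall M N B N' K R,
    eval X Y Z M (Lam B) ->
    (Y = LI /\ N' = N \/ Y = LS /\ eval X Y Z N N') ->
    step X Y Z (beta_subst B N') K R ->
    step X Y Z (App M N) K R
| st_ar2 : forall M N M' K R,
    eval X Y Z M M' -> ~ is_abs M' ->
    Z = LS -> step X Y Z N K R ->
    step X Y Z (App M N) (CAppR M' K) R.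

Definition ST (X Y Z : letter) (C : ctx) : Prop :=
  exists M R, step X Y Z M C R.

Definition uniform_ctx_set (P : ctx -> Prop) : Prop :=
  forall C1 C2 : ctx, P (ccomp C1 C2) <-> (P C1 /\ P C2).


(* A context belongs to ST_XYZ iff every frame on the path to its hole is
   licensed locally: a frame λ□ needs X = S, a frame □N is always reachable,
   and a frame M□ needs M to be a result of the evaluator and the letter
   governing the argument at that point (Y after an abstraction, Z after a
   neutral term) to be S.  The hole itself is reached by contracting
   (λx.x)x.  A conjunction of conditions on frames is clearly compositional
   under C1(C2), which gives uniformity. *)

Section UniformEvaluator.
Variables X Y Z : letter.

Definition evaluated (M : term) : Prop := exists P, eval X Y Z P M.

Definition arg_letter (M : term) : letter :=
  match M with Lam _ => Y | _ => Z end.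

Fixpoint admissible (C : ctx) : Prop :=
  match C with
  | Hole => True
  | CLam K => X = LS /\ admissible K
  | CAppL K _ => admissible K
  | CAppR M K => evaluated M /\ arg_letter M = LS /\ admissible K
  end.

Lemma step_admissible M C R : step X Y Z M C R -> admissible C.
Proof.
  induction 1 as [| | M N B K R HM HY _ IH | | | M N M' K R HM HnA HZ _ IH];
    simpl; auto.
  - repeat split; [exists M; exact HM | exact HY | exact IH].
  - repeat split; [exists M; exact HM | | exact IH].
    destruct M' as [| |]; [exact HZ | contradiction HnA; exact I | exact HZ].
Qed.

Lemma eval_id_self : eval X Y Z (Lam (Var 0)) (Lam (Var 0)).
Proof.
  apply ev_abs; destruct X; [left | right]; split; auto using ev_var.
Qed.

Lemma step_hole : exists M R, step X Y Z M Hole R.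
Proof.
  exists (App (Lam (Var 0)) (Var 0)), (App (Lam (Var 0)) (Var 0)).
  apply st_con with (B := Var 0); [exact eval_id_self |].
  destruct Y; [left | right]; split; auto using ev_var.
Qed.

Lemma admissible_step C : admissible C -> exists M R, step X Y Z M C R.
Proof.
  induction C as [| K IH | K IH N | M K IH]; simpl.
  - intros _; exact step_hole.
  - intros [HX HK]; destruct (IH HK) as (M & R & HS).
    exists (Lam M), R; apply st_abs; assumption.
  - intros HK; destruct (IH HK) as (M & R & HS).
    exists (App M N), R; apply st_op1; assumption.
  - intros [[P HP] [HL HK]]; destruct (IH HK) as (N & R & HS).
    exists (App P N), R.
    destruct M as [n | B | M1 M2].
    + apply st_ar2 with (M' := Var n); auto.
    + apply st_ar1 with (B := B); assumption.
    + apply st_ar2 with (M' := App M1 M2); auto.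
Qed.

Lemma ST_admissible C : ST X Y Z C <-> admissible C.
Proof.
  split.
  - intros (M & R & HS); exact (step_admissible M C R HS).
  - exact (admissible_step C).
Qed.

Lemma admissible_ccomp C1 C2 :
  admissible (ccomp C1 C2) <-> admissible C1 /\ admissible C2.
Proof.
  induction C1; simpl; try rewrite IHC1; tauto.
Qed.

End UniformEvaluator.

Theorem mainTheorem2 :
  forall X Y Z : letter, uniform_ctx_set (ST X Y Z).
Proof.
  intros X Y Z C1 C2.
  rewrite !ST_admissible.
  apply admissible_ccomp.
Qed.
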